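(* Let $R$ be a unital commutative ring and $(\mathcal{E},\mathcal{L},\mathcal{B})$ a normal labelled space. Let $B$ be a $\mathbb{Z}$-graded ring and $\eta:L_R(\mathcal{E},\mathcal{L},\mathcal{B})\to B$ a graded ring homomorphism (i.e. $\eta(L_R(\mathcal{E},\mathcal{L},\mathcal{B})_n)\subseteq B_n$ for all $n$) such that $\eta(rp_A)\neq 0$ for every non-empty $A\in\mathcal{B}$ and every non-zero $r\in R$. Then $\eta$ is injective.
   Context: A graph $\mathcal{E}=(\mathcal{E}^0,\mathcal{E}^1,r,s)$ consists of a set of vertices $\mathcal{E}^0$, a set of edges $\mathcal{E}^1$ and maps $r,s:\mathcal{E}^1\to\mathcal{E}^0$. A finite path is a sequence $\lambda=\lambda_1\cdots\lambda_n$ of edges with $r(\lambda_i)=s(\lambda_{i+1})$, with $s(\lambda)=s(\lambda_1)$, $r(\lambda)=r(\lambda_n)$. A labelled graph $(\mathcal{E},\mathcal{L})$ is a graph with a surjective map $\mathcal{L}:\mathcal{E}^1\to\mathcal{A}$ onto a set $\mathcal{A}$ (the alphabet), extended to paths by $\mathcal{L}(\lambda)=\mathcal{L}(\lambda_1)\cdots\mathcal{L}(\lambda_n)$. $\mathcal{L}^*(\mathcal{E})$ denotes the set of words $\mathcal{L}(\lambda)$ for finite paths $\lambda$ of positive length, together with the empty word $\omega$; $|\alpha|$ is the length of a word. For $A\subseteq\mathcal{E}^0$ and $\alpha\in\mathcal{L}^*(\mathcal{E})$, $r(A,\alpha)=\{r(\lambda)\mid \mathcal{L}(\lambda)=\alpha,\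 s(\lambda)\in A\}$ if $\alpha\neq\omega$ and $r(A,\omega)=A$; $r(\alpha)=r(\mathcal{E}^0,\alpha)$; $\mathcal{L}(A\mathcal{E}^1)=\{a\in\mathcal{A}\mid r(A,a)\neq\emptyset\}$. A labelled space $(\mathcal{E},\mathcal{L},\mathcal{B})$ is a labelled graph with a family $\mathcal{B}$ of subsets of $\mathcal{E}^0$ closed under finite intersections and finite unions, containing $r(\alpha)$ for all non-empty $\alpha\in\mathcal{L}^*(\mathcal{E})$, and with $r(A,\alpha)\in\mathcal{B}$ for all $A\in\mathcal{B}$, $\alpha\in\mathcal{L}^*(\mathcal{E})$. It is normal if additionally $r(A\cap B,\alpha)=r(A,\alpha)\cap r(B,\alpha)$ for all $A,B\in\mathcal{B}$ and non-empty $\alpha$, and $\mathcal{B}$ is closed under relative complements. A non-empty $A\in\mathcal{B}$ is regular if $0<|\mathcal{L}(B\mathcal{E}^1)|<\infty$ for every non-empty $B\in\mathcal{B}$ with $B\subseteq A$; $\mathcal{B}_{reg}$ is the set of regular sets together with $\emptyset$. For $\alpha\in\mathcal{L}^*(\mathcal{E})$, $\mathcal{B}_\alpha=\{A\in\mathcal{B}\mid A\subseteq r(\alpha)\}$. The Leavitt labelled path algebra $L_R(\mathcal{E},\mathcal{L},\mathcal{B})$ (for a normal labelled space and a unital commutative ring $R$) is the universal $R$-algebra generated by $\{p_A\mid A\in\mathcal{B}\}\cup\{s_a,s_a^*\mid a\in\mathcal{A}\}$ subject to: (i) $p_{A\cap B}=p_Ap_B$, $p_{A\cup B}=p_A+p_B-p_{A\cap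 B}$, $p_\emptyset=0$; (ii) $p_As_a=s_ap_{r(A,a)}$ and $s_a^*p_A=p_{r(A,a)}s_a^*$; (iii) $s_a^*s_a=p_{r(a)}$ and $s_b^*s_a=0$ for $b\neq a$; (iv) $s_as_a^*s_a=s_a$, $s_a^*s_as_a^*=s_a^*$; (v) $p_A=\sum_{a\in\mathcal{L}(A\mathcal{E}^1)}s_ap_{r(A,a)}s_a^*$ for every $A\in\mathcal{B}_{reg}$. For $\alpha=a_1\cdots a_n$ put $s_\alpha=s_{a_1}\cdots s_{a_n}$, $s_\alpha^*=s_{a_n}^*\cdots s_{a_1}^*$, and by convention $s_\omega p_A s_\omega^*=p_A$, $s_\omega p_A s_\beta^*=p_As_\beta^*$, etc. $L_R(\mathcal{E},\mathcal{L},\mathcal{B})$ is $\mathbb{Z}$-graded with $L_R(\mathcal{E},\mathcal{L},\mathcal{B})_n=\operatorname{span}_R\{s_\alpha p_As_\beta^*\mid \alpha,\beta\in\mathcal{L}^*(\mathcal{E}),\ A\in\mathcal{B}_\alpha\cap\mathcal{B}_\beta,\ |\alpha|-|\beta|=n\}$. *)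

From Stdlib Require Import List.
From mathcomp Require Import all_boot all_order all_algebra.
From mathcomp Require Import boolp classical_sets cardinality.
Set Implicit Arguments. Unset Strict Implicit. Unset Printing Implicit Defensive.
Import GRing.Theory.
Local Open Scope classical_set_scope.
Local Open Scope ring_scope.

(* (Leavitt labelled path algebras need not be unital, and the target ring   *)
(*  B is an arbitrary ring, so we do not use MathComp's unital ringType.)    *)

Record nuring := NURing {
  nur_sort :> zmodType;
  nur_mul : nur_sort -> nur_sort -> nur_sort;
  nur_mulA : associative nur_mul;
  nur_mulDl : left_distributive nur_mul +%R;
  nur_mulDr : right_distributive nur_mul +%R }.

Record nualg (R : comPzRingType) := NUAlg {
  nua_sort :> lmodType R;
  nua_mul : nua_sort -> nua_sort -> nua_sort;
  nua_mulA : associative nua_mul;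
  nua_mulDl : left_distributive nua_mul +%R;
  nua_mulDr : right_distributive nua_mul +%R;
  nua_scalerAl : forall (r : R) (x y : nua_sort),
      nua_mul (r *: x) y = r *: nua_mul x y;
  nua_scalerAr : forall (r : R) (x y : nua_sort),
      nua_mul x (r *: y) = r *: nua_mul x y }.

Definition nualg_hom (R : comPzRingType) (A C : nualg R) (f : A -> C) : Prop :=
  [/\ forall x y, f (x + y) = f x + f y,
      forall (r : R) x, f (r *: x) = r *: f x &
      forall x y, f (nua_mul x y) = nua_mul (f x) (f y)].

Section LabelledGraph.
Variables (V Ed : Type) (Alph : eqType).
Variables (rg sc : Ed -> V) (lab : Ed -> Alph).

Fixpoint is_path (p : seq Ed) : Prop :=
  match p with
  | [::] => True
  | e :: q => match q with
              | [::] => True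
              | f :: _ => rg e = sc f /\ is_path q
              end
  end.

Definition Lstar (w : seq Alph) : Prop :=
  w = [::] \/ exists (e : Ed) (p : seq Ed), is_path (e :: p) /\ map lab (e :: p) = w.

Definition rset (A : set V) (w : seq Alph) : set V :=
  if w is [::] then A else
  [set v | exists (e : Ed) (p : seq Ed),
     [/\ is_path (e :: p), map lab (e :: p) = w, A (sc e) & rg (last e p) = v]].

Definition rword (w : seq Alph) : set V := rset setT w.

Definition labels_out (A : set V) : set Alph :=
  [set a | rset A [:: a] != set0].

Variable BB : set (set V).

Definition labelled_space : Prop :=
  [/\ set0 \in BB,
      (forall A B, A \in BB -> B \in BB -> (A `&` B) \in BB),
      (forall A B, A \in BB -> B \in BB -> (A `|` B) \in BB),
      (forall w, Lstar w -> w != [::] -> rword w \in BB) &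
      (forall A w, A \in BB -> Lstar w -> rset A w \in BB)].

Definition normal_labelled_space : Prop :=
  [/\ labelled_space,
      (forall A B w, A \in BB -> B \in BB -> w != [::] ->
          rset (A `&` B) w = rset A w `&` rset B w) &
      (forall A B, A \in BB -> B \in BB -> (A `\` B) \in BB)].

Definition regular (A : set V) : Prop :=
  [/\ A \in BB, A != set0 &
      forall B, B \in BB -> B != set0 -> B `<=` A ->
        labels_out B != set0 /\ finite_set (labels_out B)].

Variable R : comPzRingType.

Section Relations.
Variables (C : nualg R) (p : set V -> C) (s ss : Alph -> C).
Local Notation "x ** y" := (nua_mul x y) (at level 40, left associativity).

Definition LLP_relations : Prop :=
  [/\
      (forall A B, A \in BB -> B \in BB ->
         p (A `&` B) = p A ** p B /\ p (A `|` B) = p A + p B - p (A `&` B))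
      /\ p set0 = 0,
      (forall A a, A \in BB ->
         p A ** s a = s a ** p (rset A [:: a]) /\
         ss a ** p A = p (rset A [:: a]) ** ss a),
      (forall a, ss a ** s a = p (rword [:: a])) /\
      (forall a b, b != a -> ss b ** s a = 0),
      (forall a, (s a ** ss a) ** s a = s a /\ (ss a ** s a) ** ss a = ss a) &
      (* (v) : the (finite, order-independent) sum over L(A E^1) *)
      (forall A, (regular A \/ A = set0) ->
         forall l : seq Alph, uniq l -> (forall a, a \in l <-> labels_out A a) ->
           p A = \sum_(a <- l) (s a ** p (rset A [:: a])) ** ss a)].

Definition s_word (w : seq Alph) (x : C) : C := foldr (fun a y => s a ** y) x w.
(* x * s_beta^*  = x ** s_{b_n}^* ... s_{b_1}^*  (with x ** s_omega^* = x) *)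
Definition ss_word (x : C) (w : seq Alph) : C := foldr (fun b y => y ** ss b) x w.

Definition monomial (al : seq Alph) (A : set V) (be : seq Alph) : C :=
  ss_word (s_word al (p A)) be.

Definition homogeneous (n : int) (x : C) : Prop :=
  exists l : seq (R * (seq Alph * set V * seq Alph)),
    (forall c, In c l ->
       [/\ Lstar c.2.1.1 /\ Lstar c.2.2,
           c.2.1.2 \in BB,
           c.2.1.2 `<=` rword c.2.1.1,
           c.2.1.2 `<=` rword c.2.2 &
           (size c.2.1.1)%:Z - (size c.2.2)%:Z = n]) /\
    x = \sum_(c <- l) c.1 *: monomial c.2.1.1 c.2.1.2 c.2.2.
End Relations.

Definition is_LLPA (A : nualg R) (p : set V -> A) (s ss : Alph -> A) : Prop :=
  LLP_relations p s ss /\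
  forall (C : nualg R) (q : set V -> C) (t tt : Alph -> C),
    LLP_relations q t tt ->
    exists f : A -> C,
      [/\ nualg_hom f,
          (forall X, X \in BB -> f (p X) = q X),
          (forall a, f (s a) = t a),
          (forall a, f (ss a) = tt a) &
          (forall g : A -> C, nualg_hom g ->
             (forall X, X \in BB -> g (p X) = q X) ->
             (forall a, g (s a) = t a) ->
             (forall a, g (ss a) = tt a) ->
             forall x, g x = f x)].

End LabelledGraph.

Definition Zgraded (B : nuring) (Bn : int -> set B) : Prop :=
  [/\ (forall n, Bn n 0 /\ forall x y, Bn n x -> Bn n y -> Bn n (x - y)),
      (forall m n x y, Bn m x -> Bn n y -> Bn (m + n) (nur_mul x y)),
      (forall x, exists (l : seq int) (y : int -> B),
          uniq l /\ (forall n, n \in l -> Bn n (y n)) /\ x = \sum_(n <- l) y n) &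
      (forall (l : seq int) (y : int -> B), uniq l ->
          (forall n, n \in l -> Bn n (y n)) -> \sum_(n <- l) y n = 0 ->
          forall n, n \in l -> y n = 0)].

Definition ring_hom (R : comPzRingType) (A : nualg R) (B : nuring) (f : A -> B) :
  Prop :=
  (forall x y, f (x + y) = f x + f y) /\
  (forall x y, f (nua_mul x y) = nur_mul (f x) (f y)).

(* By universality L_R is spanned by the monomials
      r s_al p_C s_be^* (all_span); grouping them by |al| - |be| yields the
      homogeneous components of every element (degree_decomposition,
      span_homogeneous).  As the grading of B is direct, the kernel of eta is
      graded, so it suffices that a homogeneous combination in the kernel
      vanishes (degree_ker).
   2. Non-zero degree.  For degree n > 0, x = sum_a s_a (s_a^* x) with s_a^* x
      of degree n - 1, and dually for n < 0 (left_decomp, right_decomp).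
   3. Degree zero, by induction on the word length (balanced_ker).  For F the
      first letters and U the union of the sets occurring in x, the gap
      projection gap_F(U) = p_U - sum_(a in F) s_a p_{r(U,a)} s_a^* cuts out
      the length-0 part of x as a combination of gap projections, and the
      rest of x is sum_(a,b in F) s_a (s_a^* x s_b) s_b^* with shorter words.
   4. Gap projections (gcomb_ker).  Splitting along the occurring sets reduces
      a combination of gap projections in the kernel to a single r gap_F(X);
      it vanishes by relation (v) if X is regular, while otherwise X contains
      a non-empty sink Z with r gap_F(X) p_Z = r p_Z, not in the kernel. *)

From HB Require Import structures.
From Pilot Require Import Defs.
From mathcomp Require Import all_boot all_order all_algebra.
From mathcomp Require Import boolp classical_sets cardinality.
From mathcomp Require Import zify.
Set Implicit Arguments. Unset Strict Implicit. Unset Printing Implicit Defensive.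
Import GRing.Theory.
Local Open Scope classical_set_scope.
Local Open Scope ring_scope.

Section AdditiveMaps.
Variables (U W : zmodType) (f : U -> W).
Hypothesis fD : {morph f : x y / x + y}.

Lemma additive0 : f 0 = 0.
Proof. by apply/eqP; rewrite -(inj_eq (addrI (f 0))) -fD !addr0. Qed.

Lemma additiveN x : f (- x) = - f x.
Proof. by apply/eqP; rewrite -addr_eq0 -fD addNr additive0. Qed.

Lemma additiveB x y : f (x - y) = f x - f y.
Proof. by rewrite fD additiveN. Qed.

Lemma additive_sum (I : Type) (r : seq I) (P : pred I) (F : I -> U) :
  f (\sum_(i <- r | P i) F i) = \sum_(i <- r | P i) f (F i).
Proof. exact: (big_morph f fD additive0). Qed.
End AdditiveMaps.

Section NonUnitalAlgebra.
Variables (R : comPzRingType) (C : nualg R).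
Local Notation "x ** y" := (nua_mul x y) (at level 40, left associativity).

Lemma nmul0l (x : C) : 0 ** x = 0.
Proof. exact: (additive0 (fun y z => nua_mulDl y z x)). Qed.
Lemma nmul0r (x : C) : x ** 0 = 0.
Proof. exact: (additive0 (nua_mulDr x)). Qed.
Lemma nmulBl (x y z : C) : (x - y) ** z = x ** z - y ** z.
Proof. exact: (additiveB (fun y z' => nua_mulDl y z' z)). Qed.
Lemma nmulBr (x y z : C) : z ** (x - y) = z ** x - z ** y.
Proof. exact: (additiveB (nua_mulDr z)). Qed.
Lemma nmul_suml (I : Type) (r : seq I) (P : pred I) (F : I -> C) (y : C) :
  (\sum_(i <- r | P i) F i) ** y = \sum_(i <- r | P i) (F i ** y).
Proof. exact: (additive_sum (fun u v => nua_mulDl u v y)). Qed.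
Lemma nmul_sumr (I : Type) (r : seq I) (P : pred I) (F : I -> C) (y : C) :
  y ** (\sum_(i <- r | P i) F i) = \sum_(i <- r | P i) (y ** F i).
Proof. exact: (additive_sum (nua_mulDr y)). Qed.
End NonUnitalAlgebra.

Section NonUnitalRing.
Variable B : nuring.

Lemma nur_mul0l (x : B) : nur_mul 0 x = 0.
Proof. exact: (additive0 (fun y z => nur_mulDl y z x)). Qed.
Lemma nur_mul0r (x : B) : nur_mul x 0 = 0.
Proof. exact: (additive0 (nur_mulDr x)). Qed.
End NonUnitalRing.

Lemma sum_pick (I : eqType) (U : nmodType) (r : seq I) (F : I -> U) (i : I) :
  uniq r -> i \in r -> (forall j, j != i -> F j = 0) -> \sum_(j <- r) F j = F i.
Proof. by move=> Hr Hi HF; rewrite (bigD1_seq i) //= big1 ?addr0 // => j /HF. Qed.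

Lemma In_mem (T : eqType) (l : seq T) x : List.In x l -> x \in l.
Proof. by elim: l => [//|y l IH] /= [->|/IH]; rewrite inE ?eqxx // => ->; rewrite orbT. Qed.

(* A subset of a non-unital R-algebra closed under all the algebra operations
   carries itself a non-unital R-algebra structure; this is used to show that
   the universal algebra L_R is spanned by its monomials. *)
Record nua_closed (R : comPzRingType) (A : nualg R) (S : A -> Prop) := NuaClosed {
  nua_closed0 : S 0;
  nua_closedD : forall x y, S x -> S y -> S (x + y);
  nua_closedN : forall x, S x -> S (- x);
  nua_closedZ : forall r x, S x -> S (r *: x);
  nua_closedM : forall x y, S x -> S y -> S (nua_mul x y) }.

Definition sub_carrier (R : comPzRingType) (A : nualg R) (S : A -> Prop)
  (_ : nua_closed S) : Type := {x : A | S x}.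

HB.instance Definition _ R A S H := gen_eqMixin (@sub_carrier R A S H).
HB.instance Definition _ R A S H := gen_choiceMixin (@sub_carrier R A S H).

Section SubAlgebra.
Variables (R : comPzRingType) (A : nualg R) (S : A -> Prop) (HS : nua_closed S).
Local Notation T := (sub_carrier HS).
Local Notation val := (@proj1_sig A S).

Lemma sub_val_inj (x y : T) : val x = val y -> x = y.
Proof. by case: x y => x Hx [y Hy] /= E; subst y; congr exist; exact: Prop_irrelevance. Qed.

Definition sub_zero : T := exist _ 0 (nua_closed0 HS).
Definition sub_add (x y : T) : T := exist _ _ (nua_closedD HS (svalP x) (svalP y)).
Definition sub_opp (x : T) : T := exist _ _ (nua_closedN HS (svalP x)).
Definition sub_scale (r : R) (x : T) : T := exist _ _ (nua_closedZ HS r (svalP x)).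
Definition sub_mul (x y : T) : T := exist _ _ (nua_closedM HS (svalP x) (svalP y)).

Lemma sub_addA : associative sub_add.
Proof. by move=> x y z; apply: sub_val_inj; rewrite /= addrA. Qed.
Lemma sub_addC : commutative sub_add.
Proof. by move=> x y; apply: sub_val_inj; rewrite /= addrC. Qed.
Lemma sub_add0 : left_id sub_zero sub_add.
Proof. by move=> x; apply: sub_val_inj; rewrite /= add0r. Qed.
Lemma sub_addN : left_inverse sub_zero sub_opp sub_add.
Proof. by move=> x; apply: sub_val_inj; rewrite /= addNr. Qed.

HB.instance Definition _ := GRing.isZmodule.Build T sub_addA sub_addC sub_add0 sub_addN.

Lemma sub_scaleA a b (x : T) : sub_scale a (sub_scale b x) = sub_scale (a * b) x.
Proof. by apply: sub_val_inj; rewrite /= scalerA. Qed.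
Lemma sub_scale1 : left_id 1 sub_scale.
Proof. by move=> x; apply: sub_val_inj; rewrite /= scale1r. Qed.
Lemma sub_scaleDr : right_distributive sub_scale +%R.
Proof. by move=> r x y; apply: sub_val_inj; rewrite /= scalerDr. Qed.
Lemma sub_scaleDl (x : T) : {morph sub_scale^~ x : a b / a + b}.
Proof. by move=> a b; apply: sub_val_inj; rewrite /= scalerDl. Qed.

HB.instance Definition _ :=
  GRing.Zmodule_isLmodule.Build R T sub_scaleA sub_scale1 sub_scaleDr sub_scaleDl.

Lemma sub_mulA : associative sub_mul.
Proof. by move=> x y z; apply: sub_val_inj; rewrite /= nua_mulA. Qed.
Lemma sub_mulDl : left_distributive sub_mul +%R.
Proof. by move=> x y z; apply: sub_val_inj; rewrite /= nua_mulDl. Qed.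
Lemma sub_mulDr : right_distributive sub_mul +%R.
Proof. by move=> x y z; apply: sub_val_inj; rewrite /= nua_mulDr. Qed.
Lemma sub_scalerAl r (x y : T) : sub_mul (r *: x) y = r *: sub_mul x y.
Proof. by apply: sub_val_inj; rewrite /= nua_scalerAl. Qed.
Lemma sub_scalerAr r (x y : T) : sub_mul x (r *: y) = r *: sub_mul x y.
Proof. by apply: sub_val_inj; rewrite /= nua_scalerAr. Qed.

Definition sub_nualg : nualg R :=
  @NUAlg R T sub_mul sub_mulA sub_mulDl sub_mulDr sub_scalerAl sub_scalerAr.

Lemma val_nualg_hom : nualg_hom (fun x : sub_nualg => val x).
Proof. by []. Qed.

Lemma val_sum (I : Type) (r : seq I) (F : I -> sub_nualg) :
  val (\sum_(i <- r) F i) = \sum_(i <- r) val (F i).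
Proof. exact: (big_morph (fun x : sub_nualg => val x)). Qed.
End SubAlgebra.

Lemma setIDdisj (T : Type) (X Y : set T) : (X `&` Y) `&` (X `\` Y) = set0.
Proof. by apply/seteqP; split => v //= [[_ H1] [_ H2]]. Qed.

Section LabelledGraphFacts.
Variables (V Ed : Type) (Alph : eqType) (rg sc : Ed -> V) (lab : Ed -> Alph).
Local Notation rset := (rset rg sc lab).
Local Notation rword := (rword rg sc lab).
Local Notation Lstar := (Lstar rg sc lab).

Lemma rset_cons X a w : rset (rset X [:: a]) w = rset X (a :: w).
Proof.
case: w => [//|b w]; apply/seteqP; split => v /=.
- move=> [e [q [Hp Hl [e0 [q0 [Hp0 Hl0 Hx0 Hv0]]] Hv]]].
  case: q0 Hl0 Hp0 Hv0 => [|? ?] //= [He0] _ Hv0.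
  by exists e0, (e :: q); split => //=; rewrite ?Hv0 ?He0 ?Hl.
- move=> [e [q [Hp Hl Hx Hv]]].
  case: q Hl Hp Hv => [|f q] //= [He Hl1 Hl2] [Hef Hp] Hv.
  exists f, q; split => //; first by rewrite /= Hl1 Hl2.
  by exists e, [::]; split => //=; rewrite He.
Qed.

Lemma rset_mono X Y w : X `<=` Y -> rset X w `<=` rset Y w.
Proof.
by case: w => [//|a w] HXY v [e [q [Hp Hl Hx Hv]]]; exists e, q; split => //; apply: HXY.
Qed.

Lemma rset_rword X w : rset X w `<=` rword w.
Proof. by case: w => [//|a w]; apply: rset_mono. Qed.

Lemma rset0 w : rset set0 w = set0.
Proof. by case: w => [//|a w]; apply/seteqP; split => // v [e [q [_ _ []]]]. Qed.

Lemma rsetU X Y w : rset (X `|` Y) w = rset X w `|` rset Y w.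
Proof.
case: w => [//|a w]; apply/seteqP; split => v /=.
- by move=> [e [q [Hp Hl [Hx|Hx] Hv]]]; [left|right]; exists e, q.
- by move=> [] [e [q [Hp Hl Hx Hv]]]; exists e, q; split => //; [left|right].
Qed.

Lemma Lstar_rword w v : rword w v -> Lstar w.
Proof. by case: w => [|a w]; [left|move=> [e [q [Hp Hl _ _]]]; right; exists e, q]. Qed.

Local Notation labels_out := (labels_out rg sc lab).

Lemma labels_out_mono X Y : X `<=` Y -> labels_out X `<=` labels_out Y.
Proof.
move=> HXY a; apply: contra => /eqP HY; apply/eqP; apply/seteqP; split=> // v Hv.
by rewrite -HY; apply: (rset_mono (w := [:: a]) HXY).
Qed.

Lemma labels_out0 X a : labels_out X = set0 -> rset X [:: a] = set0.
Proof.
move=> H0; apply/eqP; apply: contrapT => Ha.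
have : labels_out X a by apply/negP.
by rewrite H0.
Qed.

Lemma nonregular_sink (BB : set (set V)) D :
  D \in BB -> D != set0 -> ~ regular rg sc lab BB D -> finite_set (labels_out D) ->
  exists2 B0, B0 \in BB & [/\ B0 != set0, B0 `<=` D & labels_out B0 = set0].
Proof.
move=> HD HD0 Hreg Hfin; apply: contrapT => Hno; apply: Hreg; split=> // B0 HB0 HB00 HB0D.
split; last exact: sub_finite_set (labels_out_mono HB0D) Hfin.
by apply/eqP => HL0; apply: Hno; exists B0.
Qed.
End LabelledGraphFacts.

Section NormalLabelledSpaceFacts.
Variables (V Ed : Type) (Alph : eqType) (rg sc : Ed -> V) (lab : Ed -> Alph).
Variable BB : set (set V).
Hypothesis Hnorm : normal_labelled_space rg sc lab BB.
Local Notation rset := (rset rg sc lab).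
Local Notation rword := (rword rg sc lab).

Lemma BB0 : set0 \in BB.
Proof. by case: Hnorm => [[]]. Qed.
Lemma BBI X Y : X \in BB -> Y \in BB -> X `&` Y \in BB.
Proof. by case: Hnorm => [[_ H _ _ _]] _ _; apply: H. Qed.
Lemma BBU X Y : X \in BB -> Y \in BB -> X `|` Y \in BB.
Proof. by case: Hnorm => [[_ _ H _ _]] _ _; apply: H. Qed.
Lemma BBD X Y : X \in BB -> Y \in BB -> X `\` Y \in BB.
Proof. by case: Hnorm => _ _; apply. Qed.

(* BB contains r(X, w) for every word w, not only for labels of paths:
   for other words the range is empty. *)
Lemma BB_rset X w : X \in BB -> rset X w \in BB.
Proof.
move=> HX; have [Hw|Hw] := pselect (Lstar rg sc lab w).
  by case: Hnorm => [[_ _ _ _ H]] _ _; apply: H.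
case: w Hw => [//|a w] Hw; suff -> : rset X (a :: w) = set0 by exact: BB0.
apply/seteqP; split => // v [e [q [Hp Hl _ _]]].
by apply: Hw; right; exists e, q.
Qed.

Lemma BB_rword w : w != [::] -> rword w \in BB.
Proof.
move=> Hw; have [HLw|HLw] := pselect (Lstar rg sc lab w).
  by case: Hnorm => [[_ _ _ H _]] _ _; apply: H.
suff -> : rword w = set0 by exact: BB0.
by apply/seteqP; split => // v Hv; apply: HLw; exact: Lstar_rword Hv.
Qed.

Lemma rsetI X Y w : X \in BB -> Y \in BB -> rset (X `&` Y) w = rset X w `&` rset Y w.
Proof. by case: w => [//|a w] HX HY; case: Hnorm => _ H _; apply: H. Qed.
End NormalLabelledSpaceFacts.

Arguments Defs.rset : simpl never.

Section Relations.
Variables (V Ed : Type) (Alph : eqType) (rg sc : Ed -> V) (lab : Ed -> Alph).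
Variable BB : set (set V).
Hypothesis Hnorm : normal_labelled_space rg sc lab BB.
Variables (R : comPzRingType) (A : nualg R) (p : set V -> A) (s ss : Alph -> A).
Hypothesis Hrel : LLP_relations rg sc lab BB p s ss.

Local Notation "x ** y" := (nua_mul x y) (at level 40, left associativity).
Local Notation rset := (rset rg sc lab).
Local Notation rword := (rword rg sc lab).
Local Notation rs X a := (rset X [:: a]).
Local Notation rw a := (rword [:: a]).
Local Notation swd := (s_word s).
Local Notation sswd := (ss_word ss).
Local Notation mono := (monomial p s ss).
Local Notation BB0 := (BB0 Hnorm).
Local Notation BBI := (BBI Hnorm).
Local Notation BBU := (BBU Hnorm).
Local Notation BBD := (BBD Hnorm).
Local Notation BB_rset := (BB_rset Hnorm).
Local Notation BB_rword := (BB_rword Hnorm).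

Lemma BB_rs X a : X \in BB -> rs X a \in BB.
Proof. exact: BB_rset. Qed.
Lemma BB_rw a : rw a \in BB.
Proof. exact: BB_rword. Qed.

Lemma pI X Y : X \in BB -> Y \in BB -> p (X `&` Y) = p X ** p Y.
Proof. by case: Hrel => [[H _]] _ _ _ _ HX HY; case: (H X Y HX HY). Qed.
Lemma pU X Y : X \in BB -> Y \in BB -> p (X `|` Y) = p X + p Y - p (X `&` Y).
Proof. by case: Hrel => [[H _]] _ _ _ _ HX HY; case: (H X Y HX HY). Qed.
Lemma p0 : p set0 = 0.
Proof. by case: Hrel => [[_ H]]. Qed.
Lemma p_s X a : X \in BB -> p X ** s a = s a ** p (rs X a).
Proof. by case: Hrel => _ H _ _ _ HX; case: (H X a HX). Qed.
Lemma ss_p X a : X \in BB -> ss a ** p X = p (rs X a) ** ss a.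
Proof. by case: Hrel => _ H _ _ _ HX; case: (H X a HX). Qed.
Lemma ss_s a : ss a ** s a = p (rw a).
Proof. by case: Hrel => _ _ [H _] _ _. Qed.
Lemma ss_s_neq a b : b != a -> ss b ** s a = 0.
Proof. by case: Hrel => _ _ [_ H] _ _; apply: H. Qed.
Lemma mul_ss_s_neq a b x : b != a -> x ** ss b ** s a = 0.
Proof. by move=> Hab; rewrite -nua_mulA ss_s_neq // nmul0r. Qed.
Lemma s_rw a : s a = s a ** p (rw a).
Proof. by case: Hrel => _ _ _ H _; case: (H a) => Hs _; rewrite -ss_s nua_mulA Hs. Qed.
Lemma rw_ss a : ss a = p (rw a) ** ss a.
Proof. by case: Hrel => _ _ _ H _; case: (H a) => _ Hss; rewrite -ss_s Hss. Qed.

Lemma p_disjU X Y : X \in BB -> Y \in BB -> X `&` Y = set0 -> p (X `|` Y) = p X + p Y.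
Proof. by move=> HX HY H0; rewrite pU // H0 p0 subr0. Qed.
Lemma p_subl X Y : X \in BB -> Y \in BB -> X `<=` Y -> p X ** p Y = p X.
Proof. by move=> HX HY HXY; rewrite -pI // setIidl. Qed.

Lemma swd_mulr w y z : swd w y ** z = swd w (y ** z).
Proof. by elim: w => [//|a w IH] /=; rewrite -nua_mulA IH. Qed.
Lemma sswd_mull w y z : z ** sswd y w = sswd (z ** y) w.
Proof. by elim: w => [//|a w IH] /=; rewrite nua_mulA IH. Qed.
Lemma sswd_mul_foldl w x y : sswd x w ** y = x ** foldl (fun z b => ss b ** z) y w.
Proof. by elim: w x y => [//|b w IH] x y /=; rewrite -nua_mulA -IH. Qed.
Lemma sswd_rcons w x a : sswd x (rcons w a) = sswd (x ** ss a) w.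
Proof. by rewrite -cats1 /ss_word foldr_cat. Qed.
Lemma swd0 w : swd w 0 = 0.
Proof. by elim: w => [//|a w IH] /=; rewrite IH nmul0r. Qed.
Lemma sswd0 w : sswd 0 w = 0.
Proof. by elim: w => [//|a w IH] /=; rewrite IH nmul0l. Qed.

Lemma p_swd w X y : X \in BB -> p X ** swd w y = swd w (p (rset X w) ** y).
Proof.
elim: w X => [//|a w IH] X HX /=.
by rewrite nua_mulA p_s // -nua_mulA IH ?BB_rs // rset_cons.
Qed.
Lemma sswd_p w X y : X \in BB -> sswd y w ** p X = sswd (y ** p (rset X w)) w.
Proof.
elim: w X => [//|a w IH] X HX /=.
by rewrite -nua_mulA ss_p // nua_mulA IH ?BB_rs // rset_cons.
Qed.

Definition term := (R * (seq Alph * set V * seq Alph))%type.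
HB.instance Definition _ := Equality.on term.
Definition tval (c : term) : A := c.1 *: mono c.2.1.1 c.2.1.2 c.2.2.

Lemma tval_nil r C : tval (r, ([::], C, [::])) = r *: p C.
Proof. by []. Qed.
Lemma tval_sL r a al C be : tval (r, (a :: al, C, be)) = s a ** tval (r, (al, C, be)).
Proof. by rewrite /tval /= nua_scalerAr /monomial sswd_mull. Qed.
Lemma tval_ssR r al C b be : tval (r, (al, C, b :: be)) = tval (r, (al, C, be)) ** ss b.
Proof. by rewrite /tval /= nua_scalerAl /monomial. Qed.
Lemma tval_pL r al C be X : X \in BB -> C \in BB ->
  p X ** tval (r, (al, C, be)) = tval (r, (al, rset X al `&` C, be)).
Proof.
move=> HX HC; rewrite /tval /= nua_scalerAr /monomial sswd_mull p_swd // -pI //.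
exact: BB_rset.
Qed.
Lemma tval_pR r al C be X : X \in BB -> C \in BB ->
  tval (r, (al, C, be)) ** p X = tval (r, (al, C `&` rset X be, be)).
Proof.
move=> HX HC; rewrite /tval /= nua_scalerAl /monomial sswd_p // swd_mulr -pI //.
exact: BB_rset.
Qed.
(* s_a^* s_b is 0 or p_{r(a)}, so s_a^* absorbs a leading s_b. *)
Lemma tval_ssL r a b al C be : C \in BB ->
  ss a ** tval (r, (b :: al, C, be)) =
  if a == b then tval (r, (al, rset (rw a) al `&` C, be)) else 0.
Proof.
move=> HC; rewrite tval_sL nua_mulA; have [<-|Hab] := eqVneq a b.
  by rewrite ss_s tval_pL ?BB_rw.
by rewrite ss_s_neq ?nmul0l // eq_sym.
Qed.
Lemma tval_sR r a b al C be : C \in BB ->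
  tval (r, (al, C, b :: be)) ** s a =
  if a == b then tval (r, (al, C `&` rset (rw a) be, be)) else 0.
Proof.
move=> HC; rewrite tval_ssR -nua_mulA; have [<-|Hab] := eqVneq a b.
  by rewrite ss_s tval_pR ?BB_rw.
by rewrite ss_s_neq ?nmul0r // eq_sym.
Qed.

Definition spanP (P : seq Alph -> seq Alph -> Prop) (x : A) : Prop :=
  exists l : seq term, (forall c, c \in l -> c.2.1.2 \in BB /\ P c.2.1.1 c.2.2)
    /\ x = \sum_(c <- l) tval c.

Section Span.
Variable P : seq Alph -> seq Alph -> Prop.

Lemma span0 : spanP P 0.
Proof. by exists [::]; rewrite big_nil. Qed.
Lemma spanD x y : spanP P x -> spanP P y -> spanP P (x + y).
Proof.
move=> [l1 [H1 ->]] [l2 [H2 ->]]; exists (l1 ++ l2); rewrite big_cat; split => //.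
by move=> c; rewrite mem_cat => /orP [/H1|/H2].
Qed.
Lemma spanZ r x : spanP P x -> spanP P (r *: x).
Proof.
move=> [l [H ->]]; exists [seq (r * c.1, c.2) | c <- l]; split.
  by move=> _ /mapP [c /H Hc ->].
by rewrite big_map scaler_sumr; apply: eq_bigr => c _; rewrite /tval scalerA.
Qed.
Lemma spanN x : spanP P x -> spanP P (- x).
Proof. by rewrite -scaleN1r; apply: spanZ. Qed.
Lemma span_term (c : term) : c.2.1.2 \in BB -> P c.2.1.1 c.2.2 -> spanP P (tval c).
Proof.
by move=> H1 H2; exists [:: c]; rewrite big_seq1; split => // d; rewrite mem_seq1 => /eqP ->.
Qed.
Lemma span_sum (I : eqType) (r : seq I) (F : I -> A) :
  (forall i, i \in r -> spanP P (F i)) -> spanP P (\sum_(i <- r) F i).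
Proof.
elim: r => [|i r IH] H; first by rewrite big_nil; apply: span0.
rewrite big_cons; apply: spanD; first by apply: H; rewrite inE eqxx.
by apply: IH => j Hj; apply: H; rewrite inE Hj orbT.
Qed.

End Span.

Lemma span_additive (P Q : seq Alph -> seq Alph -> Prop) (f : A -> A) x :
  {morph f : u v / u + v} ->
  (forall c, c.2.1.2 \in BB -> P c.2.1.1 c.2.2 -> spanP Q (f (tval c))) ->
  spanP P x -> spanP Q (f x).
Proof.
move=> fD Hf [l [Hl ->]]; rewrite additive_sum //; apply: span_sum => c /Hl [].
exact: Hf.
Qed.

Lemma span_pL P X x : X \in BB -> spanP P x -> spanP P (p X ** x).
Proof.
move=> HX; apply: span_additive; first exact: nua_mulDr.
move=> [r [[al C] be]] /= HC HP; rewrite tval_pL //.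
by apply: span_term => //=; apply: BBI => //; exact: BB_rset.
Qed.

Definition monomial_span : A -> Prop := spanP (fun _ _ => True).

Lemma mspan_sL a x : monomial_span x -> monomial_span (s a ** x).
Proof.
apply: span_additive; first exact: nua_mulDr.
by move=> [r [[al C] be]] /= HC _; rewrite -tval_sL; apply: span_term.
Qed.

Lemma mspan_ssL a x : monomial_span x -> monomial_span (ss a ** x).
Proof.
apply: span_additive; first exact: nua_mulDr.
move=> [r [[[|b al] C] be]] /= HC _.
  have -> : ss a ** tval (r, ([::], C, be)) = tval (r, ([::], rs C a, rcons be a)).
    by rewrite /tval /= nua_scalerAr /monomial sswd_mull /= ss_p // sswd_rcons.
  by apply: span_term => //; exact: BB_rs.
rewrite tval_ssL //; case: eqP => _; last exact: span0.
by apply: span_term => //=; apply: BBI => //; apply: BB_rset; exact: BB_rw.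
Qed.

Lemma mspan_mul x y : monomial_span x -> monomial_span y -> monomial_span (x ** y).
Proof.
move=> Hx Hy; move: Hx; apply: (span_additive (f := fun z => z ** y)) => [u v|].
  exact: nua_mulDl.
move=> [r [[al C] be]] /= HC _; rewrite /tval /= nua_scalerAl; apply: spanZ.
rewrite /monomial sswd_mul_foldl swd_mulr.
elim: al => [|a al IH] /=; last exact: mspan_sL.
apply: span_pL => //; elim: be y Hy => [//|b be IH] y Hy /=.
by apply: IH; apply: mspan_ssL.
Qed.

Lemma mspan_p X : X \in BB -> monomial_span (p X).
Proof. by move=> HX; rewrite -[p X]scale1r -tval_nil; apply: span_term. Qed.
Lemma mspan_s a : monomial_span (s a).
Proof. by rewrite s_rw; apply: mspan_sL; apply: mspan_p; exact: BB_rw. Qed.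
Lemma mspan_ss a : monomial_span (ss a).
Proof.
have: monomial_span (tval (1, ([::], rw a, [:: a]))) by apply: span_term => //; exact: BB_rw.
by rewrite /tval scale1r /monomial /= -rw_ss.
Qed.

Lemma monomial_span_closed : nua_closed monomial_span.
Proof.
split; [exact: span0|exact: spanD|exact: spanN|move=> r x; exact: spanZ|exact: mspan_mul].
Qed.

Local Notation S := (sub_nualg monomial_span_closed).
Definition span_p (X : set V) : S :=
  if pselect (X \in BB) is left HX then exist _ (p X) (mspan_p HX) else 0.
Definition span_s (a : Alph) : S := exist _ (s a) (mspan_s a).
Definition span_ss (a : Alph) : S := exist _ (ss a) (mspan_ss a).

Lemma val_span_p X : X \in BB -> proj1_sig (span_p X) = p X.
Proof. by rewrite /span_p; case: pselect. Qed.

(* The subalgebra generators satisfy the defining relations, since the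
   inclusion S -> A is an injective homomorphism sending them to p, s, ss. *)
Lemma span_relations : LLP_relations rg sc lab BB span_p span_s span_ss.
Proof.
have [vD vZ vM] := val_nualg_hom monomial_span_closed.
have v0 := additive0 vD; have vB := additiveB vD.
case: Hrel => _ _ _ Hiv Hv; split.
- split; last by apply: sub_val_inj; rewrite val_span_p ?v0 ?p0 //; exact: BB0.
  move=> X Y HX HY; split; apply: sub_val_inj.
    by rewrite vM !val_span_p //; [exact: pI|exact: BBI].
  by rewrite vB vD !val_span_p //; [exact: pU|exact: BBI|exact: BBU].
- by move=> X a HX; split; apply: sub_val_inj; rewrite !vM !val_span_p ?BB_rs //;
    [exact: p_s|exact: ss_p].
- split=> [a|a b Hab]; apply: sub_val_inj; rewrite vM ?val_span_p ?BB_rw //.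
    exact: ss_s.
  by rewrite v0; exact: ss_s_neq.
- by move=> a; split; apply: sub_val_inj; rewrite !vM /=; case: (Hiv a).
- move=> X HX l Hl Hla; apply: sub_val_inj; rewrite val_sum.
  have HXB : X \in BB by case: HX => [[]|->] //; exact: BB0.
  rewrite val_span_p // (Hv X HX l Hl Hla); apply: eq_bigr => a _.
  by rewrite !vM val_span_p //; exact: BB_rs.
Qed.

(* Every element of L_R is an R-combination of monomials s_al p_C s_be^*:
   by universality the identity of L_R factors through the span. *)
Lemma all_span (HL : is_LLPA rg sc lab BB p s ss) x : monomial_span x.
Proof.
have [vD vZ vM] := val_nualg_hom monomial_span_closed.
case: HL => _ HU.
have [f [[fD fZ fM] fp fs fss _]] := HU S span_p span_s span_ss span_relations.
have [f0 [_ _ _ _ Huniq]] := HU A p s ss Hrel.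
have -> : x = proj1_sig (f x).
  transitivity (f0 x); first by apply: (Huniq id).
  symmetry; apply: (Huniq (fun y => proj1_sig (f y))).
  - by split=> [y z|r y|y z]; rewrite ?fD ?fZ ?fM ?vD ?vZ ?vM.
  - by move=> X HX; rewrite fp // val_span_p.
  - by move=> a; rewrite fs.
  - by move=> a; rewrite fss.
exact: svalP.
Qed.

Definition degree_eq (n : int) (al be : seq Alph) : Prop := (size al)%:Z - (size be)%:Z = n.

(* Replacing C by trim be (trim al C) = C n r(al) n r(be) (ignoring empty
   words) does not change the monomial s_al p_C s_be^*, and brings it into
   the normal form required in the definition of the grading. *)
Definition trim (w : seq Alph) (C : set V) : set V :=
  if w is [::] then C else C `&` rword w.

Lemma trim_BB w C : C \in BB -> trim w C \in BB.
Proof. by case: w => [//|a w] HC; apply: BBI => //; exact: BB_rword. Qed.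
Lemma trim_sub w C : trim w C `<=` rword w.
Proof. by case: w => [|a w] v //= [_ ?]. Qed.
Lemma trim_subC w C : trim w C `<=` C.
Proof. by case: w => [|a w] v //= [? _]. Qed.

Lemma swd_trim w C : C \in BB -> swd w (p C) = swd w (p (trim w C)).
Proof.
case: w => [//|a w] HC /=; rewrite [in LHS]s_rw -nua_mulA p_swd ?BB_rw // -pI //.
  by rewrite rset_cons setIC.
by apply: BB_rset; exact: BB_rw.
Qed.
Lemma sswd_trim b w y : sswd y (b :: w) = sswd (y ** p (rword (b :: w))) (b :: w).
Proof. by rewrite /= [in LHS]rw_ss nua_mulA sswd_p ?BB_rw // /rword rset_cons. Qed.

Lemma monomial_trim al C be : C \in BB -> mono al C be = mono al (trim be (trim al C)) be.
Proof.
move=> HC; rewrite /monomial swd_trim //; case: be => [//|b be].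
rewrite sswd_trim swd_mulr -pI //; first exact: trim_BB.
exact: BB_rword.
Qed.

Lemma span_homogeneous n x : spanP (degree_eq n) x -> homogeneous rg sc lab BB p s ss n x.
Proof.
move=> [l [Hl ->]].
pose S (c : term) := trim c.2.2 (trim c.2.1.1 c.2.1.2).
pose trim_term (c : term) : term := (c.1, (c.2.1.1, S c, c.2.2)).
exists [seq trim_term c | c <- l & S c != set0]; split.
  move=> _ /List.in_map_iff [c [<- /In_mem]]; rewrite mem_filter => /andP [/set0P [v Hv] Hc].
  have [HC Hdeg] := Hl c Hc.
  have H1 : S c `<=` rword c.2.1.1 by move=> u /trim_subC; exact: trim_sub.
  have H2 : S c `<=` rword c.2.2 by exact: trim_sub.
  split => //=; last by apply: trim_BB; exact: trim_BB.
  by split; [exact: Lstar_rword (H1 v Hv)|exact: Lstar_rword (H2 v Hv)].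
rewrite big_map big_filter (eq_big_seq (fun c => tval (trim_term c))) => [|c /Hl [HC _]].
  rewrite (bigID (fun c => S c != set0)) /= [X in _ + X]big1 ?addr0 // => c /negPn /eqP HS.
  by rewrite /tval /= HS /monomial p0 swd0 sswd0 scaler0.
by rewrite /tval /= -monomial_trim.
Qed.

Lemma degree_decomposition x : monomial_span x ->
  exists (L : seq int) (xn : int -> A),
    [/\ uniq L, x = \sum_(n <- L) xn n & forall n, spanP (degree_eq n) (xn n)].
Proof.
move=> [l [Hl ->]].
pose dg (c : term) : int := (size c.2.1.1)%:Z - (size c.2.2)%:Z.
exists (undup (map dg l)), (fun n => \sum_(c <- l | dg c == n) tval c).
split; first exact: undup_uniq.
  symmetry; under eq_bigr => n _ do rewrite big_mkcond.
  rewrite exchange_big; apply: eq_big_seq => c Hc.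
  rewrite (@sum_pick _ _ _ (fun n => if dg c == n then tval c else 0) (dg c)) ?eqxx //.
  - exact: undup_uniq.
  - by rewrite mem_undup map_f.
  - by move=> n Hn; rewrite eq_sym (negbTE Hn).
move=> n; exists [seq c <- l | dg c == n]; rewrite big_filter; split => // c.
by rewrite mem_filter => /andP [/eqP Hdg /Hl [HC _]].
Qed.

Definition first_letters (l : seq term) : seq Alph :=
  undup (flatten [seq take 1 c.2.1.1 ++ take 1 c.2.2 | c <- l]).

Lemma first_letterL l c a w : c \in l -> c.2.1.1 = a :: w -> a \in first_letters l.
Proof.
move=> Hc Hw; rewrite mem_undup; apply/flattenP.
by exists (take 1 c.2.1.1 ++ take 1 c.2.2); [exact: map_f|rewrite Hw mem_cat inE eqxx].
Qed.
Lemma first_letterR l c b w : c \in l -> c.2.2 = b :: w -> b \in first_letters l.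
Proof.
move=> Hc Hw; rewrite mem_undup; apply/flattenP.
by exists (take 1 c.2.1.1 ++ take 1 c.2.2); [exact: map_f|rewrite Hw mem_cat inE eqxx orbT].
Qed.

Lemma first_letters_uniq l : uniq (first_letters l).
Proof. exact: undup_uniq. Qed.

(* For positive degree every monomial starts with some s_a, hence
   x = sum_a s_a (s_a^* x); dually for negative degree. *)
Lemma left_decomp l x : (forall c, c \in l -> c.2.1.1 != [::]) ->
  x = \sum_(c <- l) tval c -> x = \sum_(a <- first_letters l) s a ** (ss a ** x).
Proof.
move=> Hne Ex; rewrite [in RHS]Ex.
under eq_bigr => a _ do rewrite !nmul_sumr.
rewrite exchange_big Ex; apply: eq_big_seq => -[r [[[|b al] C] be]] Hc /=.
  by move: (Hne _ Hc).
rewrite tval_sL (sum_pick (first_letters_uniq l) (first_letterL Hc (erefl _))) => [|a Ha].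
  by rewrite [ss b ** _]nua_mulA ss_s nua_mulA -s_rw.
by rewrite [ss a ** _]nua_mulA ss_s_neq // nmul0l nmul0r.
Qed.

Lemma right_decomp l x : (forall c, c \in l -> c.2.2 != [::]) ->
  x = \sum_(c <- l) tval c -> x = \sum_(b <- first_letters l) (x ** s b) ** ss b.
Proof.
move=> Hne Ex; rewrite [in RHS]Ex.
under eq_bigr => b _ do rewrite !nmul_suml.
rewrite exchange_big Ex; apply: eq_big_seq => -[r [[al C] [|b be]]] Hc /=.
  by move: (Hne _ Hc).
rewrite tval_ssR (sum_pick (first_letters_uniq l) (first_letterR Hc (erefl _))) => [|a Ha].
  by rewrite -[_ ** ss b ** s b]nua_mulA ss_s -[_ ** p _ ** ss b]nua_mulA -rw_ss.
by rewrite -[_ ** ss b ** s a]nua_mulA ss_s_neq 1?eq_sym // nmul0r nmul0l.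
Qed.

Lemma degree_ssL a n x : 0 < n -> spanP (degree_eq n) x -> spanP (degree_eq (n - 1)) (ss a ** x).
Proof.
move=> Hn; apply: span_additive; first exact: nua_mulDr.
move=> [r [[[|b al] C] be]] /= HC; rewrite /degree_eq /=; first by lia.
move=> Hdeg; rewrite tval_ssL //; case: eqP => _; last exact: span0.
apply: span_term => /=; last by rewrite /degree_eq; lia.
by apply: BBI => //; apply: BB_rset; exact: BB_rw.
Qed.

Lemma degree_sR b n x : n < 0 -> spanP (degree_eq n) x -> spanP (degree_eq (n + 1)) (x ** s b).
Proof.
move=> Hn; apply: (span_additive (f := fun y => y ** s b)) => [u v|]; first exact: nua_mulDl.
move=> [r [[al C] [|b' be]]] /= HC; rewrite /degree_eq /=; first by lia.
move=> Hdeg; rewrite tval_sR //; case: eqP => _; last exact: span0.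
apply: span_term => /=; last by rewrite /degree_eq; lia.
by apply: BBI => //; apply: BB_rset; exact: BB_rw.
Qed.

Local Notation meet L X := [seq (c.1, c.2 `&` X) | c <- L].
Local Notation diff L X := [seq (c.1, c.2 `\` X) | c <- L].
Local Notation allBB L := (forall c, c \in L -> c.2 \in BB).

Section GapProjection.
Variable F : seq Alph.
Hypothesis HF : uniq F.

Definition gap (X : set V) : A := p X - \sum_(a <- F) s a ** p (rs X a) ** ss a.

Lemma gap_s X a : X \in BB -> a \in F -> gap X ** s a = 0.
Proof.
move=> HX Ha; rewrite /gap nmulBl nmul_suml (sum_pick HF Ha).
  by rewrite -!nua_mulA ss_s p_subl ?BB_rw ?BB_rs ?p_s ?subrr //; exact: rset_rword.
by move=> b Hb; rewrite -nua_mulA ss_s_neq ?nmul0r.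
Qed.

Lemma gap_p X Y : X \in BB -> Y \in BB -> gap X ** p Y = gap (X `&` Y).
Proof.
move=> HX HY; rewrite /gap nmulBl nmul_suml -pI //; congr (_ - _).
apply: eq_bigr => a _.
by rewrite (rsetI Hnorm) // pI ?BB_rs // -!nua_mulA ss_p // !nua_mulA.
Qed.

Lemma gap_gap X Y : X \in BB -> Y \in BB -> gap X ** gap Y = gap (X `&` Y).
Proof.
move=> HX HY; rewrite {2}/gap nmulBr gap_p // nmul_sumr big1_seq ?subr0 //.
by move=> a /= Ha; rewrite !nua_mulA gap_s // !nmul0l.
Qed.

Lemma gap0 : gap set0 = 0.
Proof. by rewrite /gap p0 big1 ?subr0 // => a _; rewrite rset0 p0 nmul0r nmul0l. Qed.

Lemma gap_split X Y : X \in BB -> Y \in BB -> gap X = gap (X `&` Y) + gap (X `\` Y).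
Proof.
move=> HX HY; have HI := BBI HX HY; have HD := BBD HX HY.
have EX : X = (X `&` Y) `|` (X `\` Y) by rewrite setUIDK.
rewrite /gap {1}EX p_disjU ?setIDdisj //.
rewrite (eq_bigr (fun a => s a ** p (rs (X `&` Y) a) ** ss a +
                           s a ** p (rs (X `\` Y) a) ** ss a)).
  by rewrite big_split opprD addrACA.
move=> a _; rewrite -nua_mulDl -nua_mulDr {1}EX rsetU p_disjU ?BB_rs //.
by rewrite -(rsetI Hnorm) // setIDdisj rset0.
Qed.

Lemma ss_gap_s b X : X \in BB -> b \notin F -> ss b ** gap X ** s b = p (rs X b).
Proof.
move=> HX HbF; rewrite /gap nmulBr nmulBl nmul_sumr nmul_suml big1_seq.
  by rewrite subr0 ss_p // -nua_mulA ss_s p_subl ?BB_rw ?BB_rs //; exact: rset_rword.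
move=> a /= Ha; rewrite !nua_mulA ss_s_neq ?nmul0l //.
by apply/eqP => Eba; move: HbF; rewrite Eba Ha.
Qed.

Lemma gap_regular X : regular rg sc lab BB X -> labels_out rg sc lab X `<=` [set` F] ->
  gap X = 0.
Proof.
move=> Hreg HXF; case: Hrel => _ _ _ _ /(_ X (or_introl Hreg)) Hv.
pose l := [seq a <- F | `[< labels_out rg sc lab X a >]].
have Hla a : a \in l <-> labels_out rg sc lab X a.
  rewrite mem_filter; split; first by case/andP => /asboolP.
  by move=> Ha; apply/andP; split; [apply/asboolP|apply: HXF].
rewrite /gap (Hv l (filter_uniq _ HF) Hla) big_filter.
rewrite [X in _ - X](bigID (fun a => `[< labels_out rg sc lab X a >])) /=.
rewrite [X in _ - (_ + X)]big1 ?addr0 ?subrr // => a /asboolPn Ha.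
have -> : rs X a = set0 by apply/eqP; apply: contrapT => /negP.
by rewrite p0 nmul0r nmul0l.
Qed.

Lemma gap_sink X Z : X \in BB -> Z \in BB -> Z `<=` X ->
  labels_out rg sc lab Z = set0 -> gap X ** p Z = p Z.
Proof.
move=> HX HZ HZX HZ0; rewrite gap_p // setIidr // /gap big1 ?subr0 // => a _.
by rewrite labels_out0 // p0 nmul0r nmul0l.
Qed.

Definition corner (y : A) : A :=
  \sum_(a <- F) \sum_(b <- F) s a ** (ss a ** y ** s b) ** ss b.

Lemma cornerD : {morph corner : x y / x + y}.
Proof.
move=> x y; rewrite /corner -big_split; apply: eq_bigr => a _.
rewrite -big_split; apply: eq_bigr => b _.
by rewrite nua_mulDr nua_mulDl nua_mulDr nua_mulDl.
Qed.

Lemma corner_s_ss a b Y : a \in F -> b \in F -> corner (s a ** Y ** ss b) = s a ** Y ** ss b.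
Proof.
move=> Ha Hb; rewrite /corner (sum_pick HF Ha) => [|a' Ha'].
  rewrite (sum_pick HF Hb) => [|b' Hb'].
    have -> : ss a ** (s a ** Y ** ss b) ** s b = p (rw a) ** Y ** p (rw b).
      by rewrite !nua_mulA ss_s -!nua_mulA ss_s.
    by rewrite !nua_mulA -s_rw -!nua_mulA -rw_ss.
  by rewrite !nua_mulA (@mul_ss_s_neq b' b) 1?eq_sym // !nmul0l.
rewrite big1 // => b' _.
by rewrite !nua_mulA (@mul_ss_s_neq a a') // !nmul0l.
Qed.

Lemma corner_p r C : C \in BB -> corner (r *: p C) = r *: (p C - gap C).
Proof.
move=> HC; rewrite /gap opprB addrC subrK /corner scaler_sumr.
apply: eq_big_seq => a Ha; rewrite (sum_pick HF Ha) => [|b Hb].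
  rewrite !(nua_scalerAr, nua_scalerAl) ss_p // -[_ ** ss a ** s a]nua_mulA ss_s.
  by rewrite p_subl ?BB_rw ?BB_rs //; exact: rset_rword.
rewrite !(nua_scalerAr, nua_scalerAl) ss_p // -[_ ** ss a ** s b]nua_mulA.
by rewrite ss_s_neq 1?eq_sym // !nmul0r nmul0l scaler0.
Qed.

Definition gcomb (L : seq (R * set V)) : A := \sum_(c <- L) c.1 *: gap c.2.

Lemma gcomb_cons r C L : gcomb ((r, C) :: L) = r *: gap C + gcomb L.
Proof. by rewrite /gcomb big_cons. Qed.

Lemma gcomb_meet L X : allBB L -> X \in BB -> gcomb L ** gap X = gcomb (meet L X).
Proof.
move=> HL HX; rewrite /gcomb nmul_suml big_map; apply: eq_big_seq => c Hc.
by rewrite nua_scalerAl gap_gap // HL.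
Qed.

Lemma gcomb_split L X : allBB L -> X \in BB ->
  gcomb L = gcomb (meet L X) + gcomb (diff L X).
Proof.
move=> HL HX; rewrite /gcomb !big_map -big_split; apply: eq_big_seq => c Hc /=.
by rewrite -scalerDr -gap_split // HL.
Qed.

End GapProjection.

Definition support (l : seq term) : set V := foldr (fun c U => c.2.1.2 `|` U) set0 l.

Lemma support_BB l : (forall c, c \in l -> c.2.1.2 \in BB) -> support l \in BB.
Proof.
elim: l => [|c l IH] Hl /=; first exact: BB0.
by apply: BBU; [apply: Hl; exact: mem_head|apply: IH => d Hd; apply: Hl; rewrite inE Hd orbT].
Qed.
Lemma support_sub l c : c \in l -> c.2.1.2 `<=` support l.
Proof.
elim: l => [//|d l IH]; rewrite in_cons => /predU1P [-> v Hv|/IH Hc v Hv]; by [left|right; apply: Hc].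
Qed.

Definition balanced (al be : seq Alph) : Prop := size al = size be.
Definition balanced_le (m : nat) (al be : seq Alph) : Prop :=
  balanced al be /\ (size al <= m)%N.

Definition zero_part (F : seq Alph) (c : term) : A :=
  if c.2.1.1 is [::] then c.1 *: gap F c.2.1.2 else 0.

Section BalancedTerm.
Variables (F : seq Alph) (U : set V) (c : term).
Hypotheses (HF : uniq F) (HU : U \in BB) (HC : c.2.1.2 \in BB)
  (HCU : c.2.1.2 `<=` U) (Hbal : balanced c.2.1.1 c.2.2)
  (HFl : forall a w, c.2.1.1 = a :: w -> a \in F)
  (HFr : forall b w, c.2.2 = b :: w -> b \in F).

Lemma gap_sandwich : gap F U ** tval c ** gap F U = zero_part F c.
Proof.
move: HC HCU Hbal HFl; case: c => r [[[|a al] C] [|b be]] //= HC' HCU' _ HFl'.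
  by rewrite nua_scalerAr nua_scalerAl gap_p // (setIidr HCU') gap_gap // setIidl.
by rewrite tval_sL !nua_mulA gap_s ?nmul0l //; apply: (HFl' a al).
Qed.

Lemma corner_term : corner F (tval c) = tval c - zero_part F c.
Proof.
move: HC Hbal HFl HFr; case: c => r [[[|a al] C] [|b be]] //= HC' _ HFl' HFr'.
  by rewrite corner_p // scalerBr.
by rewrite tval_sL tval_ssR nua_mulA corner_s_ss ?subr0 //;
  [apply: (HFl' a al)|apply: (HFr' b be)].
Qed.
End BalancedTerm.

Lemma compress_span m a b x : spanP (balanced_le m.+1) x ->
  spanP (balanced_le m) (ss a ** x ** s b).
Proof.
apply: (span_additive (f := fun y => ss a ** y ** s b)).
  by move=> u v; rewrite nua_mulDr nua_mulDl.
move=> [r [[al C] be]] /= HC [].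
case: al be => [|a' al] [|b' be] //= Hbal Hle.
  rewrite tval_nil !(nua_scalerAr, nua_scalerAl) ss_p // -nua_mulA.
  have [<-|Hab] := eqVneq a b; last by rewrite ss_s_neq // nmul0r scaler0; exact: span0.
  rewrite ss_s -(pI (BB_rs a HC) (BB_rw a)) -tval_nil.
  by apply: span_term => //; apply: BBI; [exact: BB_rs|exact: BB_rw].
rewrite tval_ssL //; case: eqP => [_|_]; last by rewrite nmul0l; exact: span0.
rewrite tval_sR; last by apply: BBI => //; apply: BB_rset; exact: BB_rw.
case: eqP => _; last exact: span0.
apply: span_term; last by split; [case: Hbal|].
by apply: BBI; [apply: BBI => //|]; apply: BB_rset; exact: BB_rw.
Qed.

Section Kernel.
Variables (B : nuring) (eta : A -> B).
Hypothesis Hhom : ring_hom eta.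
Hypothesis Hnz : forall (X : set V) (r : R), X \in BB -> X != set0 -> r != 0 ->
  eta (r *: p X) != 0.

Lemma etaD : {morph eta : x y / x + y}.
Proof. by case: Hhom. Qed.
Lemma etaB x y : eta (x - y) = eta x - eta y.
Proof. exact: (additiveB etaD). Qed.
Lemma ker_mull x y : eta x = 0 -> eta (y ** x) = 0.
Proof. by case: Hhom => _ etaM H; rewrite etaM H nur_mul0r. Qed.
Lemma ker_mulr x y : eta x = 0 -> eta (x ** y) = 0.
Proof. by case: Hhom => _ etaM H; rewrite etaM H nur_mul0l. Qed.

Section KernelGap.
Variable F : seq Alph.
Hypothesis HF : uniq F.
Local Notation gap := (gap F).
Local Notation gcomb := (gcomb F).

(* If a non-zero multiple of gap X lies in the kernel of eta, then every
   label emitted by X is in F: otherwise s_b^* (r gap X) s_b = r p_{r(X,b)}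
   would be a non-zero element of the kernel. *)
Lemma ker_gap_labels r X : X \in BB -> r != 0 -> eta (r *: gap X) = 0 ->
  labels_out rg sc lab X `<=` [set` F].
Proof.
move=> HX Hr Hker b Hb; apply: contrapT => /negP HbF.
move/eqP: (Hnz (BB_rs b HX) Hb Hr); apply.
by rewrite -(ss_gap_s HX HbF) -nua_scalerAl -nua_scalerAr ker_mulr ?ker_mull.
Qed.

(* A single multiple r gap X in the kernel of eta is zero: X emits only
   labels of F, so X is regular (and gap X = 0 by relation (v)) unless it
   contains a non-empty sink Z, on which r gap X p_Z = r p_Z is non-zero. *)
Lemma gap_atom r X : X \in BB -> eta (r *: gap X) = 0 -> r *: gap X = 0.
Proof.
move=> HX Hker.
have [->|Hr] := eqVneq r 0; first by rewrite scale0r.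
have [->|HX0] := eqVneq X set0; first by rewrite gap0 scaler0.
have HXF := ker_gap_labels HX Hr Hker.
have [Hreg|Hreg] := pselect (regular rg sc lab BB X).
  by rewrite gap_regular // scaler0.
have [Z HZ [HZ0 HZX HZl]] :=
  nonregular_sink HX HX0 Hreg (sub_finite_set HXF (finite_seq F)).
exfalso; move/eqP: (Hnz HZ HZ0 Hr); apply.
by rewrite -(gap_sink F HX HZ HZX HZl) -nua_scalerAl ker_mulr.
Qed.

(* Splitting a combination along X: if both halves satisfy the kernel
   property, so does the combination, since the meet-half is gcomb L gap X. *)
Lemma gcomb_ker_split L X : allBB L -> X \in BB -> eta (gcomb L) = 0 ->
  (eta (gcomb (meet L X)) = 0 -> gcomb (meet L X) = 0) ->
  (eta (gcomb (diff L X)) = 0 -> gcomb (diff L X) = 0) -> gcomb L = 0.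
Proof.
move=> HL HX Hker Hmeet Hdiff.
have Hkm : eta (gcomb (meet L X)) = 0 by rewrite -gcomb_meet // ker_mulr.
have Hkd : eta (gcomb (diff L X)) = 0.
  by apply/eqP; rewrite -(inj_eq (addrI (eta (gcomb (meet L X)))))
    -etaD -gcomb_split // Hker Hkm addr0.
by rewrite (gcomb_split F HL HX) Hmeet // Hdiff // addr0.
Qed.

(* Splitting along the set D of the
   second term merges the first two terms (meet) or empties the second one
   (difference); both shorten the combination. *)
Lemma gcomb_ker_nested n r C L :
  (forall L', (size L' <= n)%N -> allBB L' -> eta (gcomb L') = 0 -> gcomb L' = 0) ->
  (size L <= n)%N -> C \in BB -> allBB L -> (forall c, c \in L -> c.2 `<=` C) ->
  eta (gcomb ((r, C) :: L)) = 0 -> gcomb ((r, C) :: L) = 0.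
Proof.
move=> IH; case: L => [|[r1 D] M] Hsize HC HL HLC Hker.
  by move: Hker; rewrite gcomb_cons /gcomb big_nil !addr0; apply: gap_atom.
have HD : D \in BB by apply: (HL (r1, D)); rewrite inE eqxx.
have HM : allBB M by move=> c Hc; apply: HL; rewrite inE Hc orbT.
have HDC : D `<=` C by apply: (HLC (r1, D)); rewrite inE eqxx.
have HML X : X \in BB -> allBB (meet M X).
  by move=> HX _ /mapP [c Hc ->]; apply: BBI => //; exact: HM.
have HMD X : X \in BB -> allBB (diff M X).
  by move=> HX _ /mapP [c Hc ->]; apply: BBD => //; exact: HM.
apply: (gcomb_ker_split (X := D)) => //.
- move=> c; rewrite in_cons => /predU1P [-> //|]; exact: HL.
- have -> : gcomb (meet ((r, C) :: (r1, D) :: M) D) = gcomb ((r + r1, D) :: meet M D).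
    by rewrite /= !gcomb_cons setIidr // setIid scalerDl addrA.
  apply: IH; first by rewrite /= size_map.
  by move=> c; rewrite in_cons => /predU1P [-> //|]; exact: HML.
- have -> : gcomb (diff ((r, C) :: (r1, D) :: M) D) = gcomb ((r, C `\` D) :: diff M D).
    by rewrite /= !gcomb_cons setDv gap0 scaler0 add0r.
  apply: IH; first by rewrite /= size_map.
  move=> c; rewrite in_cons => /predU1P [-> /=|]; last exact: HMD.
  exact: BBD.
Qed.

Lemma gcomb_ker L : allBB L -> eta (gcomb L) = 0 -> gcomb L = 0.
Proof.
move: {2}(size L) (leqnn (size L)) => n; elim: n L => [|n IH] [|[r C] L] //=;
  try by rewrite /gcomb big_nil.
rewrite ltnS => Hsize HL Hker.
have HC : C \in BB by apply: (HL (r, C)); rewrite inE eqxx.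
have HL' : allBB L by move=> c Hc; apply: HL; rewrite inE Hc orbT.
apply: (gcomb_ker_split (X := C)) => //.
- rewrite /= setIid; apply: (gcomb_ker_nested IH) => //; first by rewrite size_map.
  + by move=> _ /mapP [c Hc ->]; apply: BBI => //; exact: HL'.
  + by move=> _ /mapP [c Hc ->] v [].
- rewrite /= gcomb_cons setDv gap0 scaler0 add0r; apply: IH; first by rewrite size_map.
  by move=> _ /mapP [c Hc ->]; apply: BBD => //; exact: HL'.
Qed.
End KernelGap.

(* Degree zero, by induction on the length of the words: the gap
   projection gap U (for U covering all sets, F all first letters) reduces
   the length-0 part to a gap combination, which vanishes; the remaining
   part is recovered by the corner map from the shorter s_a^* x s_b. *)
Lemma balanced_ker_step m :
  (forall y, spanP (balanced_le m) y -> eta y = 0 -> y = 0) ->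
  forall x, spanP (balanced_le m.+1) x -> eta x = 0 -> x = 0.
Proof.
move=> IH x Hx Heta; have [l [Hl Ex]] := Hx.
pose F := first_letters l; have HF : uniq F := first_letters_uniq l.
pose U := support l; have HU : U \in BB by apply: support_BB => c /Hl [].
have Hterm c : c \in l -> [/\ c.2.1.2 \in BB, c.2.1.2 `<=` U, balanced c.2.1.1 c.2.2,
    forall a w, c.2.1.1 = a :: w -> a \in F & forall b w, c.2.2 = b :: w -> b \in F].
  move=> Hc; have [HC [Hbal _]] := Hl c Hc; split => //; first exact: support_sub.
    by move=> a w; apply: first_letterL.
  by move=> b w; apply: first_letterR.
pose L0 := [seq (c.1, c.2.1.2) | c <- l & nilp c.2.1.1].
have Ezero : \sum_(c <- l) zero_part F c = gcomb F L0.
  rewrite /gcomb big_map big_filter [RHS]big_mkcond; apply: eq_bigr => -[r [[[|a al] C] be]] _ //.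
have HL0 : gcomb F L0 = 0.
  apply: gcomb_ker => //; first by move=> _ /mapP [c Hc ->]; move: Hc; rewrite mem_filter => /andP [_ /Hl []].
  rewrite -Ezero (eq_big_seq (fun c => gap F U ** tval c ** gap F U)).
    by rewrite -nmul_suml -nmul_sumr -Ex ker_mulr ?ker_mull.
  by move=> c /Hterm [HC HCU Hbal HFl HFr]; rewrite gap_sandwich.
have Ecorner : corner F x = x.
  rewrite Ex (additive_sum (cornerD F)) (eq_big_seq (fun c => tval c - zero_part F c)).
    by rewrite sumrB Ezero HL0 subr0.
  by move=> c /Hterm [HC HCU Hbal HFl HFr]; exact: corner_term.
rewrite -Ecorner /corner big1 // => a _; rewrite big1 // => b _.
rewrite (IH (ss a ** x ** s b)) ?nmul0r ?nmul0l //; first exact: compress_span.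
by rewrite ker_mulr ?ker_mull.
Qed.

Lemma balanced0_ker x : spanP (balanced_le 0) x -> eta x = 0 -> x = 0.
Proof.
move=> [l [Hl ->]] Heta.
have E0 : \sum_(c <- l) tval c = gcomb [::] [seq (c.1, c.2.1.2) | c <- l].
  rewrite /gcomb big_map; apply: eq_big_seq => -[r [[al C] be]] /Hl /= [_ [Hbal]].
  rewrite leqn0 size_eq0 => /eqP Hal; move: Hbal; rewrite /balanced Hal.
  by case: be => // _; rewrite /gap big_nil subr0.
rewrite E0; apply: gcomb_ker => //; last by rewrite -E0.
by move=> _ /mapP [c /Hl [HC _] ->].
Qed.

Lemma balanced_le_ker m x : spanP (balanced_le m) x -> eta x = 0 -> x = 0.
Proof. by elim: m x => [|m IH] x; [exact: balanced0_ker|exact: (balanced_ker_step IH)]. Qed.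

Lemma balanced_ker x : spanP balanced x -> eta x = 0 -> x = 0.
Proof.
move=> [l [Hl Ex]]; apply: (@balanced_le_ker (\max_(c <- l) size c.2.1.1)).
exists l; split => // c Hc; have [HC Hbal] := Hl c Hc; do 2!split => //.
by rewrite (big_rem c) //= leq_maxl.
Qed.

(* The graded uniqueness property for one homogeneous component: by
   induction on |n|, shifting the degree towards 0 with s_a^* or s_b. *)
Lemma degree_ker n x : spanP (degree_eq n) x -> eta x = 0 -> x = 0.
Proof.
move: {2}`|n|%N (erefl `|n|%N) => k; elim: k n x => [|k IH] n x Hk Hx Heta.
  have Hn : n = 0 by lia.
  apply: balanced_ker => //; have [l [Hl Ex]] := Hx; exists l; split => // c /Hl [HC].
  by rewrite /degree_eq Hn /balanced; lia.
have [l [Hl Ex]] := Hx.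
have [Hpos|Hneg] := boolP (0 < n).
  rewrite (left_decomp _ Ex) => [|c /Hl [_]]; last first.
    by rewrite /degree_eq; case: (c.2.1.1) => //= Hd; exfalso; lia.
  rewrite big1 // => a _; rewrite (IH (n - 1) (ss a ** x)) ?nmul0r //; first by lia.
    exact: degree_ssL.
  exact: ker_mull.
have Hn : n < 0 by move: Hk Hneg; lia.
rewrite (right_decomp _ Ex) => [|c /Hl [_]]; last first.
  by rewrite /degree_eq; case: (c.2.2) => //= Hd; exfalso; lia.
rewrite big1 // => b _; rewrite (IH (n + 1) (x ** s b)) ?nmul0l //; first by lia.
  exact: degree_sR.
exact: ker_mulr.
Qed.

End Kernel.
End Relations.

Theorem corollary5p3
  (R : comPzRingType) (V Ed : Type) (Alph : eqType)
  (rg sc : Ed -> V) (lab : Ed -> Alph) (BB : set (set V))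
  (A : nualg R) (p : set V -> A) (s ss : Alph -> A)
  (B : nuring) (Bn : int -> set B) (eta : A -> B) :
  (forall a : Alph, exists e : Ed, lab e = a) ->
  normal_labelled_space rg sc lab BB ->
  is_LLPA rg sc lab BB p s ss ->
  Zgraded Bn ->
  ring_hom eta ->
  (forall (n : int) (x : A), homogeneous rg sc lab BB p s ss n x -> Bn n (eta x)) ->
  (forall (X : set V) (r : R), X \in BB -> X != set0 -> r != 0 ->
      eta (r *: p X) != 0) ->
  injective eta.
Proof.
move=> _ Hnorm HLL [_ _ _ Hdirect] Hhom Hgraded Hnz x y Exy.
have Hrel := HLL.1; apply/eqP; rewrite -subr_eq0; apply/eqP.
have [L [xn [HuL Ex Hxn]]] := degree_decomposition (all_span Hnorm Hrel HLL (x - y)).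
(* As the grading of B is direct, each component lies in the kernel ... *)
have Hker n : n \in L -> eta (xn n) = 0.
  apply: (Hdirect L (fun n => eta (xn n))) => // [m _|].
    exact/Hgraded/(span_homogeneous Hnorm Hrel).
  by rewrite -(additive_sum (etaD Hhom)) -Ex (etaB Hhom) Exy subrr.
rewrite Ex big1_seq // => n /= Hn.
exact: (degree_ker Hnorm Hrel Hhom Hnz (Hxn n) (Hker n Hn)).
Qed.
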